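(* (Destructor to consumer case.) Let $P$ be a FOOD program with global context $\Delta$, translated by $\Delta;\Gamma\vdash P\Rightarrow T_0\leadsto P'$, with $P'$ having global context $\Delta'$ (components written with a prime). If $C\in\textsc{Gen}(D)$, $f\in\textsc{Dtr}(D)$, $\textsc{dtrBody}(f,C)=(\overline y,\overline x,e)$ and $\Delta;\Gamma\vdash e\Rightarrow T\leadsto e'$, then $C\in\textsc{Ctr}'(D)$, $f\in\textsc{Csm}'(D)$ and $\textsc{csmBody}'(f,C)=(\overline y,\overline x,[\texttt{this}\mapsto\texttt{self}]e')$.
   Context: FOOD programs consist of definitions followed by an expression. Definitions: datatypes $\texttt{data}\ D$; interfaces $\texttt{interface}\ D\{\overline{Dtr}\}$ with destructors (declarations $\texttt{def}\ f(\overline{x:T}):T$ or functions $\texttt{def}\ f(\overline{x:T}):T=e$ giving a default body); constructors $\texttt{case}\ C(\overline{x:T})\ \texttt{extends}\ D$; generators $\texttt{class}\ C(\overline{x:T})\ \texttt{implements}\ D\{\overline{Fun}\}$; consumers $\texttt{def}\ f(\texttt{self}:D)(\overline{x:T}):T=\overline{\texttt{case}\ P\Rightarrow e}$ with patterns $C(\overline x)$ or $\_$. Global context: $\textsc{Ctr}(D)$, $\textsc{Gen}(D)$, $\textsc{Dtr}(D)$, $\textsc{Csm}(D)$ the constructors, generators, destructors and consumers of $D$. Lookups: $\textsc{dtrBody}(f,C)=(\overline y,\overline x,e)$ if $\texttt{class}\ C(\overline{y:T})\ \texttt{implements}\ D$ contains $\texttt{def}\ f(\overline{x:T}):T=e$,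 and $(\varnothing,\overline x,e)$ if instead interface $D$ contains $\texttt{def}\ f(\overline{x:T}):T=e$; $\textsc{csmBody}(f,C)=(\overline y,\overline x,e)$ if consumer $f$ has clause $\texttt{case}\ C(\overline y)\Rightarrow e$, and $(\varnothing,\overline x,e)$ if it has clause $\texttt{case}\ \_\Rightarrow e$. $[a\mapsto b]e$ is substitution. The translation $\Delta;\Gamma\vdash\cdot\Rightarrow T\leadsto\cdot$ maps each transformed interface $D$ to $\texttt{data}\ D$ with, for each destructor $\texttt{def}\ f(\overline{x:T}):T[=e_0]$, a consumer $\texttt{def}\ f(\texttt{self}:D)(\overline{x:T}):T$ whose clauses are $\texttt{case}\ C(\overline y)\Rightarrow[\texttt{this}\mapsto\texttt{self}]e'$ for each generator $C(\overline{y:S})$ of $D$ containing $\texttt{def}\ f(\overline{x:T}):T=e$ where $\Gamma,\overline{y:S},\overline{x:T}\vdash e\Rightarrow T\leadsto e'$ (rule Fun2Case), plus, when the default $e_0$ exists, $\texttt{case}\ \_\Rightarrow[\texttt{this}\mapsto\texttt{self}]e_0'$ with $\Gamma,\overline{x:T}\vdash e_0\Rightarrow T\leadsto e_0'$ (rule Fun2Csm); generators of $D$ become constructors $\texttt{case}\ C(\overline{x:T})\ \texttt{extends}\ D$. Expressions are translated type-directedly: destructor selections $e_1.f(\overline{e_2})$ on transformed interfaces become consumer applications $f(e_1')(\overline{e_2'})$, consumer applications on transformed datatypes become selections, $\texttt{new}\ C(\overline e)$ becomes $C(\overline{e'})$ for generators of transformed interfaces and $C(\overline e)$ becomes $\texttt{new}\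 C(\overline{e'})$ for constructors of transformed datatypes; other forms translate subexpressions only. *)

From Stdlib Require Import String List Bool.
Import ListNotations.


Definition name := string.
Definition var := string.    (* variables; "this" and "self" are ordinary variables *)

(* Types T are type names D (of a datatype or an interface). *)
Inductive expr : Type :=
| EVar  (x : var)
| ESel  (e : expr) (f : name) (es : list expr)   (* e.f(es) : destructor selection *)
| ECsm  (f : name) (e : expr) (es : list expr)   (* f(e)(es) : consumer application *)
| ENew  (C : name) (es : list expr)              (* new C(es) : generator instance *)
| ECtor (C : name) (es : list expr).             (* C(es) : constructor application *)

Definition params := list (var * name).

(* destructor of an interface: def f(xs):T   or   def f(xs):T = e *)
Inductive dtr : Type := Dtr (f : name) (xs : params) (T : name) (body : option expr).
Inductive fn : Type := Fn (f : name) (xs : params) (T : name) (body : expr).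
Inductive pat : Type := PCtor (C : name) (ys : list var) | PWild.

Inductive def : Type :=
| DData (D : name)
| DIntf (D : name) (ds : list dtr)
| DCtor (C : name) (ys : params) (D : name)                 (* case C(ys) extends D *)
| DGen  (C : name) (ys : params) (D : name) (fs : list fn)  (* class C(ys) implements D { fs } *)
| DCsm  (f : name) (D : name) (xs : params) (T : name)
        (cls : list (pat * expr)).                          (* def f(self:D)(xs):T = cls *)

Definition program : Type := (list def * expr)%type.
Definition gctx := list def.
Definition tctx := list (var * name). (* local typing context Gamma; later bindings shadow *)

Definition prog_ctx (P : program) : gctx := fst P.

Fixpoint subst (a : var) (b : expr) (e : expr) : expr :=
  match e with
  | EVar x => if String.eqb x a then b else EVar x
  | ESel e0 f es => ESel (subst a b e0) f (map (subst a b) es)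
  | ECsm f e0 es => ECsm f (subst a b e0) (map (subst a b) es)
  | ENew C es => ENew C (map (subst a b) es)
  | ECtor C es => ECtor C (map (subst a b) es)
  end.

Definition this_to_self (e : expr) : expr := subst "this"%string (EVar "self"%string) e.
Definition self_to_this (e : expr) : expr := subst "self"%string (EVar "this"%string) e.

Definition Ctr (Δ : gctx) (D C : name) : Prop := exists ys, In (DCtor C ys D) Δ.
Definition Gen (Δ : gctx) (D C : name) : Prop := exists ys fs, In (DGen C ys D fs) Δ.
Definition Dtr_ (Δ : gctx) (D f : name) : Prop :=
  exists ds xs T b, In (DIntf D ds) Δ /\ In (Dtr f xs T b) ds.
Definition Csm (Δ : gctx) (D f : name) : Prop :=
  exists xs T cls, In (DCsm f D xs T cls) Δ.

Fixpoint lookup (x : var) (Γ : tctx) : option name :=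
  match Γ with
  | [] => None
  | (y, T) :: Γ' =>
      match lookup x Γ' with
      | Some T' => Some T'
      | None => if String.eqb y x then Some T else None
      end
  end.

Fixpoint find_intf (Δ : gctx) (D : name) : option (list dtr) :=
  match Δ with
  | [] => None
  | DIntf D' ds :: Δ' => if String.eqb D' D then Some ds else find_intf Δ' D
  | _ :: Δ' => find_intf Δ' D
  end.

Fixpoint find_gen (Δ : gctx) (C : name) : option (params * name * list fn) :=
  match Δ with
  | [] => None
  | DGen C' ys D fs :: Δ' => if String.eqb C' C then Some (ys, D, fs) else find_gen Δ' C
  | _ :: Δ' => find_gen Δ' C
  end.

Fixpoint find_ctor (Δ : gctx) (C : name) : option (params * name) :=
  match Δ with
  | [] => None
  | DCtor C' ys D :: Δ' => if String.eqb C' C then Some (ys, D) else find_ctor Δ' C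
  | _ :: Δ' => find_ctor Δ' C
  end.

Fixpoint find_csm (Δ : gctx) (f : name)
  : option (name * params * name * list (pat * expr)) :=
  match Δ with
  | [] => None
  | DCsm f' D xs T cls :: Δ' =>
      if String.eqb f' f then Some (D, xs, T, cls) else find_csm Δ' f
  | _ :: Δ' => find_csm Δ' f
  end.

Fixpoint find_dtr (f : name) (ds : list dtr) : option dtr :=
  match ds with
  | [] => None
  | (Dtr f' _ _ _ as d) :: ds' => if String.eqb f' f then Some d else find_dtr f ds'
  end.

Fixpoint find_fn (f : name) (fs : list fn) : option fn :=
  match fs with
  | [] => None
  | (Fn f' _ _ _ as g) :: fs' => if String.eqb f' f then Some g else find_fn f fs'
  end.

Fixpoint find_clause (C : name) (cls : list (pat * expr)) : option (list var * expr) :=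
  match cls with
  | [] => None
  | (PCtor C' ys, e) :: cls' => if String.eqb C' C then Some (ys, e) else find_clause C cls'
  | _ :: cls' => find_clause C cls'
  end.

Fixpoint find_wild (cls : list (pat * expr)) : option expr :=
  match cls with
  | [] => None
  | (PWild, e) :: _ => Some e
  | _ :: cls' => find_wild cls'
  end.

Fixpoint gens (Δ : gctx) (D : name) : list (name * params * list fn) :=
  match Δ with
  | [] => []
  | DGen C ys D' fs :: Δ' => if String.eqb D' D then (C, ys, fs) :: gens Δ' D else gens Δ' D
  | _ :: Δ' => gens Δ' D
  end.

Fixpoint csms (Δ : gctx) (D : name) : list (name * params * name * list (pat * expr)) :=
  match Δ with
  | [] => []
  | DCsm f D' xs T cls :: Δ' =>
      if String.eqb D' D then (f, xs, T, cls) :: csms Δ' D else csms Δ' D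
  | _ :: Δ' => csms Δ' D
  end.

Definition dtrBody (Δ : gctx) (f C : name) : option (list var * list var * expr) :=
  match find_gen Δ C with
  | Some (ys, D, fs) =>
      match find_fn f fs with
      | Some (Fn _ xs _ e) => Some (map fst ys, map fst xs, e)
      | None =>
          match find_intf Δ D with
          | Some ds =>
              match find_dtr f ds with
              | Some (Dtr _ xs _ (Some e)) => Some ([], map fst xs, e)
              | _ => None
              end
          | None => None
          end
      end
  | None => None
  end.

Definition csmBody (Δ : gctx) (f C : name) : option (list var * list var * expr) :=
  match find_csm Δ f with
  | Some (_, xs, _, cls) =>
      match find_clause C cls with
      | Some (ys, e) => Some (ys, map fst xs, e)
      | None =>
          match find_wild cls with
          | Some e => Some ([], map fst xs, e)
          | None => None
          end
      end
  | None => None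
  end.

(* Well-formedness of a global context: names are unique.  Destructors *)
(* and consumers share one namespace, constructors and generators      *)
(* share one namespace (the translation swaps them).                   *)

Definition type_names (Δ : gctx) : list name :=
  flat_map (fun d => match d with DData D => [D] | DIntf D _ => [D] | _ => [] end) Δ.
Definition ctor_names (Δ : gctx) : list name :=
  flat_map (fun d => match d with DCtor C _ _ => [C] | DGen C _ _ _ => [C] | _ => [] end) Δ.
Definition dtr_name (d : dtr) : name := let 'Dtr f _ _ _ := d in f.
Definition fn_name (g : fn) : name := let 'Fn f _ _ _ := g in f.
Definition fun_names (Δ : gctx) : list name :=
  flat_map (fun d => match d with
                     | DIntf _ ds => map dtr_name ds
                     | DCsm f _ _ _ _ => [f]
                     | _ => [] end) Δ.

Definition wf_ctx (Δ : gctx) : Prop :=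
  NoDup (type_names Δ) /\ NoDup (ctor_names Δ) /\ NoDup (fun_names Δ) /\
  (forall C ys D fs, In (DGen C ys D fs) Δ -> NoDup (map fn_name fs)).

(*   Δ;Γ ⊢ e ⇒ T ↝ e'   written   trans_expr Δ tr Γ e T e'              *)
(* tr D = true  iff the type D is transformed (interface -> data or     *)
(* data -> interface).                                                  *)

Inductive trans_expr (Δ : gctx) (tr : name -> bool) (Γ : tctx)
  : expr -> name -> expr -> Prop :=
| TE_Var : forall x T,
    lookup x Γ = Some T ->
    trans_expr Δ tr Γ (EVar x) T (EVar x)
| TE_Sel : forall e1 D e1' f ds xs T b es es',
    trans_expr Δ tr Γ e1 D e1' ->
    find_intf Δ D = Some ds ->
    find_dtr f ds = Some (Dtr f xs T b) ->
    trans_exprs Δ tr Γ es (map snd xs) es' ->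
    trans_expr Δ tr Γ (ESel e1 f es) T
      (if tr D then ECsm f e1' es' else ESel e1' f es')
| TE_Csm : forall e1 D e1' f xs T cls es es',
    trans_expr Δ tr Γ e1 D e1' ->
    find_csm Δ f = Some (D, xs, T, cls) ->
    trans_exprs Δ tr Γ es (map snd xs) es' ->
    trans_expr Δ tr Γ (ECsm f e1 es) T
      (if tr D then ESel e1' f es' else ECsm f e1' es')
| TE_New : forall C ys D fs es es',
    find_gen Δ C = Some (ys, D, fs) ->
    trans_exprs Δ tr Γ es (map snd ys) es' ->
    trans_expr Δ tr Γ (ENew C es) D
      (if tr D then ECtor C es' else ENew C es')
| TE_Ctor : forall C ys D es es',
    find_ctor Δ C = Some (ys, D) ->
    trans_exprs Δ tr Γ es (map snd ys) es' ->
    trans_expr Δ tr Γ (ECtor C es) D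
      (if tr D then ENew C es' else ECtor C es')
with trans_exprs (Δ : gctx) (tr : name -> bool) (Γ : tctx)
  : list expr -> list name -> list expr -> Prop :=
| TEs_nil : trans_exprs Δ tr Γ [] [] []
| TEs_cons : forall e T e' es Ts es',
    trans_expr Δ tr Γ e T e' ->
    trans_exprs Δ tr Γ es Ts es' ->
    trans_exprs Δ tr Γ (e :: es) (T :: Ts) (e' :: es').

Inductive fun2case (Δ : gctx) (tr : name -> bool) (Γ : tctx)
          (f : name) (xs : params) (T : name)
  : list (name * params * list fn) -> list (pat * expr) -> Prop :=
| F2C_nil : fun2case Δ tr Γ f xs T [] []
| F2C_skip : forall C ys fs gs cls,
    find_fn f fs = None ->
    fun2case Δ tr Γ f xs T gs cls ->
    fun2case Δ tr Γ f xs T ((C, ys, fs) :: gs) cls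
| F2C_case : forall C (ys : params) fs e e' gs cls,
    find_fn f fs = Some (Fn f xs T e) ->
    trans_expr Δ tr (Γ ++ ys ++ xs) e T e' ->
    fun2case Δ tr Γ f xs T gs cls ->
    fun2case Δ tr Γ f xs T ((C, ys, fs) :: gs)
             ((PCtor C (map fst ys), this_to_self e') :: cls).

Inductive dtr2csm (Δ : gctx) (tr : name -> bool) (Γ : tctx) (D : name)
  : dtr -> def -> Prop :=
| D2C_nodef : forall f xs T cls,
    fun2case Δ tr Γ f xs T (gens Δ D) cls ->
    dtr2csm Δ tr Γ D (Dtr f xs T None) (DCsm f D xs T cls)
| D2C_def : forall f xs T e0 e0' cls,
    fun2case Δ tr Γ f xs T (gens Δ D) cls ->
    trans_expr Δ tr (Γ ++ xs) e0 T e0' ->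
    dtr2csm Δ tr Γ D (Dtr f xs T (Some e0))
            (DCsm f D xs T (cls ++ [(PWild, this_to_self e0')])).

Inductive csm2dtr (Δ : gctx) (tr : name -> bool) (Γ : tctx)
  : (name * params * name * list (pat * expr)) -> dtr -> Prop :=
| C2D_nodef : forall f xs T cls,
    find_wild cls = None ->
    csm2dtr Δ tr Γ (f, xs, T, cls) (Dtr f xs T None)
| C2D_def : forall f xs T cls e e',
    find_wild cls = Some e ->
    trans_expr Δ tr (Γ ++ xs) e T e' ->
    csm2dtr Δ tr Γ (f, xs, T, cls) (Dtr f xs T (Some (self_to_this e'))).

Inductive case2fun (Δ : gctx) (tr : name -> bool) (Γ : tctx) (C : name) (ys : params)
  : list (name * params * name * list (pat * expr)) -> list fn -> Prop :=
| C2F_nil : case2fun Δ tr Γ C ys [] []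
| C2F_skip : forall f xs T cls cs fs,
    find_clause C cls = None ->
    case2fun Δ tr Γ C ys cs fs ->
    case2fun Δ tr Γ C ys ((f, xs, T, cls) :: cs) fs
| C2F_fun : forall f (xs : params) T cls e e' cs fs,
    find_clause C cls = Some (map fst ys, e) ->
    trans_expr Δ tr (Γ ++ ys ++ xs) e T e' ->
    case2fun Δ tr Γ C ys cs fs ->
    case2fun Δ tr Γ C ys ((f, xs, T, cls) :: cs) (Fn f xs T (self_to_this e') :: fs).

Inductive trans_dtr (Δ : gctx) (tr : name -> bool) (Γ : tctx) : dtr -> dtr -> Prop :=
| TD_nodef : forall f xs T, trans_dtr Δ tr Γ (Dtr f xs T None) (Dtr f xs T None)
| TD_def : forall f xs T e e',
    trans_expr Δ tr (Γ ++ xs) e T e' ->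
    trans_dtr Δ tr Γ (Dtr f xs T (Some e)) (Dtr f xs T (Some e')).

Inductive trans_fn (Δ : gctx) (tr : name -> bool) (Γ : tctx) (ys : params) : fn -> fn -> Prop :=
| TF : forall f xs T e e',
    trans_expr Δ tr (Γ ++ ys ++ xs) e T e' ->
    trans_fn Δ tr Γ ys (Fn f xs T e) (Fn f xs T e').

Inductive trans_clause (Δ : gctx) (tr : name -> bool) (Γ : tctx) (xs : params) (T : name)
  : (pat * expr) -> (pat * expr) -> Prop :=
| TC_ctor : forall C ys ysT D e e',
    find_ctor Δ C = Some (ysT, D) ->
    length ys = length ysT ->
    trans_expr Δ tr (Γ ++ combine ys (map snd ysT) ++ xs) e T e' ->
    trans_clause Δ tr Γ xs T (PCtor C ys, e) (PCtor C ys, e')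
| TC_wild : forall e e',
    trans_expr Δ tr (Γ ++ xs) e T e' ->
    trans_clause Δ tr Γ xs T (PWild, e) (PWild, e').

Inductive trans_def (Δ : gctx) (tr : name -> bool) (Γ : tctx) : def -> list def -> Prop :=
| TDef_data_keep : forall D, tr D = false -> trans_def Δ tr Γ (DData D) [DData D]
| TDef_data_tr : forall D ds,
    tr D = true ->
    Forall2 (csm2dtr Δ tr Γ) (csms Δ D) ds ->
    trans_def Δ tr Γ (DData D) [DIntf D ds]
| TDef_intf_keep : forall D ds ds',
    tr D = false ->
    Forall2 (trans_dtr Δ tr Γ) ds ds' ->
    trans_def Δ tr Γ (DIntf D ds) [DIntf D ds']
| TDef_intf_tr : forall D ds cs,
    tr D = true ->
    Forall2 (dtr2csm Δ tr Γ D) ds cs ->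
    trans_def Δ tr Γ (DIntf D ds) (DData D :: cs)
| TDef_ctor_keep : forall C ys D,
    tr D = false -> trans_def Δ tr Γ (DCtor C ys D) [DCtor C ys D]
| TDef_ctor_tr : forall C ys D fs,
    tr D = true ->
    case2fun Δ tr Γ C ys (csms Δ D) fs ->
    trans_def Δ tr Γ (DCtor C ys D) [DGen C ys D fs]
| TDef_gen_keep : forall C ys D fs fs',
    tr D = false ->
    Forall2 (trans_fn Δ tr Γ ys) fs fs' ->
    trans_def Δ tr Γ (DGen C ys D fs) [DGen C ys D fs']
| TDef_gen_tr : forall C ys D fs,
    tr D = true -> trans_def Δ tr Γ (DGen C ys D fs) [DCtor C ys D]
| TDef_csm_keep : forall f D xs T cls cls',
    tr D = false ->
    Forall2 (trans_clause Δ tr Γ xs T) cls cls' ->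
    trans_def Δ tr Γ (DCsm f D xs T cls) [DCsm f D xs T cls']
| TDef_csm_tr : forall f D xs T cls,
    tr D = true -> trans_def Δ tr Γ (DCsm f D xs T cls) [].

(* Δ;Γ ⊢ P ⇒ T0 ↝ P'  with Δ the global context of P *)
Definition trans_prog (tr : name -> bool) (Γ : tctx) (P : program) (T0 : name)
           (P' : program) : Prop :=
  exists dss,
    Forall2 (trans_def (fst P) tr Γ) (fst P) dss /\
    fst P' = concat dss /\
    trans_expr (fst P) tr Γ (snd P) T0 (snd P').

(** A generator [C] of the transformed interface [D] becomes a constructor, and
    a destructor [f] of [D] becomes a consumer whose clauses are the Fun2Case
    clauses of the generators implementing [f], followed by the Fun2Csm wildcard
    when [f] has a default body.  In a well-formed context names are unique, so
    the consumer found for [f] in the translated context is this one, and its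
    clause for [C] is the Fun2Case clause if [C] implements [f] and the wildcard
    otherwise; in both cases its body translates the body given by [dtrBody].
    Finally the translation of an expression is deterministic (it depends neither
    on the local context nor on the inferred type), so that body is
    [[this ↦ self]e']. *)

From Stdlib Require Import String List Bool.
Import ListNotations.

Lemma NoDup_app_disjoint {A} (l1 l2 : list A) x :
  NoDup (l1 ++ l2) -> In x l1 -> ~ In x l2.
Proof.
  induction l1 as [|a l1 IH]; simpl; intros Hnd Hx1 Hx2; [easy|].
  inversion Hnd as [|? ? Ha Hnd']; subst.
  destruct Hx1 as [<-|Hx1].
  - apply Ha, in_or_app; auto.
  - exact (IH Hnd' Hx1 Hx2).
Qed.

Lemma NoDup_flat_map_eq {A B} (g : A -> list B) L a1 a2 x :
  NoDup (flat_map g L) -> In a1 L -> In a2 L -> In x (g a1) -> In x (g a2) ->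
  a1 = a2.
Proof.
  induction L as [|a L IH]; simpl; intros Hnd H1 H2 Hx1 Hx2; [easy|].
  destruct H1 as [<-|H1], H2 as [<-|H2]; auto.
  - exfalso; apply (NoDup_app_disjoint _ _ x Hnd Hx1), in_flat_map; eauto.
  - exfalso; apply (NoDup_app_disjoint _ _ x Hnd Hx2), in_flat_map; eauto.
  - apply IH; auto. eapply NoDup_app_remove_l; eauto.
Qed.

Lemma NoDup_flat_map_in {A B} (g : A -> list B) L a :
  NoDup (flat_map g L) -> In a L -> NoDup (g a).
Proof.
  induction L as [|b L IH]; simpl; intros Hnd Ha; [easy|].
  destruct Ha as [<-|Ha].
  - eapply NoDup_app_remove_r; eauto.
  - apply IH; auto. eapply NoDup_app_remove_l; eauto.
Qed.

Lemma NoDup_map_inj {A B} (g : A -> B) L a1 a2 :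
  NoDup (map g L) -> In a1 L -> In a2 L -> g a1 = g a2 -> a1 = a2.
Proof.
  induction L as [|a L IH]; simpl; intros Hnd H1 H2 Heq; [easy|].
  inversion Hnd as [|? ? Ha Hnd']; subst.
  destruct H1 as [<-|H1], H2 as [<-|H2]; auto;
    exfalso; apply Ha; [rewrite Heq|rewrite <- Heq]; apply in_map; auto.
Qed.

Lemma Forall2_in_l {A B} (R : A -> B -> Prop) l1 l2 a :
  Forall2 R l1 l2 -> In a l1 -> exists b, In b l2 /\ R a b.
Proof.
  induction 1 as [|a' b' l1 l2 Hab _ IH]; simpl; intros Ha; [easy|].
  destruct Ha as [<-|Ha]; [eauto|].
  destruct (IH Ha) as (b & ? & ?); eauto.
Qed.

Lemma Forall2_in_r {A B} (R : A -> B -> Prop) l1 l2 b :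
  Forall2 R l1 l2 -> In b l2 -> exists a, In a l1 /\ R a b.
Proof.
  induction 1 as [|a' b' l1 l2 Hab _ IH]; simpl; intros Hb; [easy|].
  destruct Hb as [<-|Hb]; [eauto|].
  destruct (IH Hb) as (a & ? & ?); eauto.
Qed.

Lemma find_intf_in {Δ D ds} : find_intf Δ D = Some ds -> In (DIntf D ds) Δ.
Proof.
  induction Δ as [|[] Δ IH]; simpl; auto; [easy|].
  destruct (String.eqb_spec D0 D); [intros [= <-]; subst|]; auto.
Qed.

Lemma find_gen_in {Δ C ys D fs} :
  find_gen Δ C = Some (ys, D, fs) -> In (DGen C ys D fs) Δ.
Proof.
  induction Δ as [|[] Δ IH]; simpl; auto; [easy|].
  destruct (String.eqb_spec C0 C); [intros [= <- <- <-]; subst|]; auto.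
Qed.

Lemma find_csm_in {Δ f D xs T cls} :
  find_csm Δ f = Some (D, xs, T, cls) -> In (DCsm f D xs T cls) Δ.
Proof.
  induction Δ as [|[] Δ IH]; simpl; auto; [easy|].
  destruct (String.eqb_spec f0 f); [intros [= <- <- <- <-]; subst|]; auto.
Qed.

Lemma find_csm_complete {Δ f D xs T cls} :
  In (DCsm f D xs T cls) Δ -> exists r, find_csm Δ f = Some r.
Proof.
  induction Δ as [|d Δ IH]; simpl; [easy|].
  intros [->|H]; [rewrite String.eqb_refl; eauto|].
  destruct d; auto. destruct (String.eqb f0 f); eauto.
Qed.

Lemma find_dtr_in {f ds d} : find_dtr f ds = Some d -> In d ds /\ dtr_name d = f.
Proof.
  induction ds as [|[f' xs T b] ds IH]; simpl; [easy|].
  destruct (String.eqb_spec f' f); [intros [= <-]; subst; auto|].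
  intros H; destruct (IH H); auto.
Qed.

Lemma In_gens Δ D C ys fs : In (C, ys, fs) (gens Δ D) <-> In (DGen C ys D fs) Δ.
Proof.
  induction Δ as [|d Δ IH]; simpl; [easy|].
  destruct d; try (rewrite IH; intuition congruence).
  destruct (String.eqb_spec D0 D); subst; simpl; rewrite IH; intuition congruence.
Qed.

Lemma find_clause_app_wild C cls e :
  find_clause C (cls ++ [(PWild, e)]) = find_clause C cls.
Proof.
  induction cls as [|[[C' ys|] e'] cls IH]; simpl; auto.
  destruct (String.eqb C' C); auto.
Qed.

Lemma find_wild_app_wild cls e :
  find_wild cls = None -> find_wild (cls ++ [(PWild, e)]) = Some e.
Proof.
  induction cls as [|[[C' ys|] e'] cls IH]; simpl; auto; discriminate.
Qed.

Section UniqueNames.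
Context {Δ : gctx}.

Lemma gen_unique {C ys1 D1 fs1 ys2 D2 fs2} :
  NoDup (ctor_names Δ) ->
  In (DGen C ys1 D1 fs1) Δ -> In (DGen C ys2 D2 fs2) Δ ->
  ys1 = ys2 /\ D1 = D2 /\ fs1 = fs2.
Proof.
  intros Hnd H1 H2.
  assert (E : DGen C ys1 D1 fs1 = DGen C ys2 D2 fs2)
    by (apply (NoDup_flat_map_eq _ _ _ _ C Hnd H1 H2); simpl; auto).
  injection E; auto.
Qed.

Lemma dtr_unique {D1 ds1 d1 D2 ds2 d2} :
  NoDup (fun_names Δ) ->
  In (DIntf D1 ds1) Δ -> In d1 ds1 -> In (DIntf D2 ds2) Δ -> In d2 ds2 ->
  dtr_name d1 = dtr_name d2 -> D1 = D2 /\ d1 = d2.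
Proof.
  intros Hnd HI1 Hd1 HI2 Hd2 Hname.
  assert (E : DIntf D1 ds1 = DIntf D2 ds2).
  { apply (NoDup_flat_map_eq _ _ _ _ (dtr_name d1) Hnd HI1 HI2); simpl.
    - apply in_map; auto.
    - rewrite Hname; apply in_map; auto. }
  injection E as -> ->. split; [reflexivity|].
  apply (NoDup_map_inj dtr_name ds2); auto.
  exact (NoDup_flat_map_in _ _ _ Hnd HI2).
Qed.

Lemma dtr_not_csm {D ds f xs T b D' xs' T' cls} :
  NoDup (fun_names Δ) ->
  In (DIntf D ds) Δ -> In (Dtr f xs T b) ds -> ~ In (DCsm f D' xs' T' cls) Δ.
Proof.
  intros Hnd HI Hd Hc.
  assert (E : DIntf D ds = DCsm f D' xs' T' cls).
  { apply (NoDup_flat_map_eq _ _ _ _ f Hnd HI Hc); simpl; auto.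
    change f with (dtr_name (Dtr f xs T b)); apply in_map; auto. }
  discriminate.
Qed.

Lemma find_dtr_owner {D1 ds1 d1 D2 ds2 d2 f} :
  NoDup (fun_names Δ) ->
  find_intf Δ D1 = Some ds1 -> find_dtr f ds1 = Some d1 ->
  find_intf Δ D2 = Some ds2 -> find_dtr f ds2 = Some d2 -> D1 = D2.
Proof.
  intros Hnd HI1 Hd1 HI2 Hd2.
  apply find_dtr_in in Hd1 as [Hd1 E1], Hd2 as [Hd2 E2].
  apply (dtr_unique Hnd (find_intf_in HI1) Hd1 (find_intf_in HI2) Hd2); congruence.
Qed.

End UniqueNames.

Scheme trans_expr_mut := Induction for trans_expr Sort Prop
with trans_exprs_mut := Induction for trans_exprs Sort Prop.

Lemma trans_expr_det {Δ tr Γ1 Γ2 e T1 T2 e1 e2} :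
  NoDup (fun_names Δ) ->
  trans_expr Δ tr Γ1 e T1 e1 -> trans_expr Δ tr Γ2 e T2 e2 -> e1 = e2.
Proof.
  intros Hnd H1. revert Γ2 T2 e2.
  induction H1 as
      [x T Hx
      |e1 D e1' f ds xs T b es es' _ IH HI Hd _ IHs
      |e1 D e1' f xs T cls es es' _ IH Hf _ IHs
      |C ys D fs es es' Hf _ IHs
      |C ys D es es' Hf _ IHs
      |
      |e T e' es Ts es' _ IH _ IHs]
    using trans_expr_mut with
    (P0 := fun es Ts es1 _ =>
             forall Γ2 Ts2 es2, trans_exprs Δ tr Γ2 es Ts2 es2 -> es1 = es2);
    intros Γ2 T2 e2 H2; inversion H2; subst; try reflexivity.
  - match goal with
    | HI2 : find_intf _ _ = Some _, Hd2 : find_dtr _ _ = Some _ |- _ =>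
        rewrite <- (find_dtr_owner Hnd HI Hd HI2 Hd2)
    end.
    erewrite IH, IHs by eauto; reflexivity.
  - match goal with H : find_csm _ _ = Some _ |- _ =>
      rewrite Hf in H; injection H as -> -> -> ->
    end.
    erewrite IH, IHs by eauto; reflexivity.
  - match goal with H : find_gen _ _ = Some _ |- _ =>
      rewrite Hf in H; injection H as -> -> ->
    end.
    erewrite IHs by eauto; reflexivity.
  - match goal with H : find_ctor _ _ = Some _ |- _ =>
      rewrite Hf in H; injection H as -> ->
    end.
    erewrite IHs by eauto; reflexivity.
  - erewrite IH, IHs by eauto; reflexivity.
Qed.

Section Fun2Case.
Variables (Δ : gctx) (tr : name -> bool) (Γ : tctx) (f : name) (xs : params) (T : name).

Lemma fun2case_find_wild gs cls :
  fun2case Δ tr Γ f xs T gs cls -> find_wild cls = None.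
Proof. induction 1; simpl; auto. Qed.

Lemma fun2case_find_clause_None C gs cls :
  fun2case Δ tr Γ f xs T gs cls ->
  (forall ys fs, In (C, ys, fs) gs -> find_fn f fs = None) ->
  find_clause C cls = None.
Proof.
  induction 1 as [|C' ys fs gs cls _ _ IH|C' ys fs e e' gs cls Hfn _ _ IH];
    simpl; intros Hnone; [reflexivity| |].
  - apply IH; intros ys' fs' Hin; apply (Hnone ys'); auto.
  - destruct (String.eqb_spec C' C) as [<-|].
    + rewrite (Hnone ys fs) in Hfn by auto; discriminate.
    + apply IH; intros ys' fs' Hin; apply (Hnone ys'); auto.
Qed.

Lemma fun2case_find_clause C ys fs g gs cls :
  fun2case Δ tr Γ f xs T gs cls ->
  (forall ys' fs', In (C, ys', fs') gs -> ys' = ys /\ fs' = fs) ->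
  In (C, ys, fs) gs -> find_fn f fs = Some g ->
  exists e e', g = Fn f xs T e /\ trans_expr Δ tr (Γ ++ ys ++ xs) e T e' /\
    find_clause C cls = Some (map fst ys, this_to_self e').
Proof.
  induction 1 as [|C' ys' fs' gs cls Hfn' _ IH|C' ys' fs' e e' gs cls Hfn' He _ IH];
    simpl; intros Huniq Hin Hfn; [easy| |].
  - destruct Hin as [[= -> -> ->]|Hin]; [congruence|auto].
  - destruct (String.eqb_spec C' C) as [<-|].
    + destruct (Huniq ys' fs') as [-> ->]; auto.
      exists e, e'. split; [congruence|auto].
    + destruct Hin as [[= -> -> ->]|Hin]; [congruence|auto].
Qed.

End Fun2Case.

Lemma dtr2csm_find_clause {Δ tr Γ D f xs T b cls C ys fs g} :
  dtr2csm Δ tr Γ D (Dtr f xs T b) (DCsm f D xs T cls) ->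
  (forall ys' fs', In (C, ys', fs') (gens Δ D) -> ys' = ys /\ fs' = fs) ->
  In (C, ys, fs) (gens Δ D) -> find_fn f fs = Some g ->
  exists e e', g = Fn f xs T e /\ trans_expr Δ tr (Γ ++ ys ++ xs) e T e' /\
    find_clause C cls = Some (map fst ys, this_to_self e').
Proof.
  inversion 1; subst; [|rewrite find_clause_app_wild];
    eapply fun2case_find_clause; eauto.
Qed.

Lemma dtr2csm_find_wild {Δ tr Γ D f xs T e0 cls C} :
  dtr2csm Δ tr Γ D (Dtr f xs T (Some e0)) (DCsm f D xs T cls) ->
  (forall ys fs, In (C, ys, fs) (gens Δ D) -> find_fn f fs = None) ->
  exists e0', trans_expr Δ tr (Γ ++ xs) e0 T e0' /\
    find_clause C cls = None /\ find_wild cls = Some (this_to_self e0').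
Proof.
  inversion 1 as [|? ? ? ? e0' cls' Hf2c Hte]; subst; intros Hnone.
  exists e0'; split; [exact Hte|split].
  - rewrite find_clause_app_wild; eapply fun2case_find_clause_None; eauto.
  - apply find_wild_app_wild; eapply fun2case_find_wild; eauto.
Qed.

Section TranslatedContext.
Context {Δ : gctx} {tr : name -> bool} {Γ : tctx} {dss : list (list def)}.
Hypothesis Htrans : Forall2 (trans_def Δ tr Γ) Δ dss.

Lemma gen_translated_ctor {C ys D fs} :
  tr D = true -> In (DGen C ys D fs) Δ -> In (DCtor C ys D) (concat dss).
Proof.
  intros HtrD HG.
  destruct (Forall2_in_l _ _ _ _ Htrans HG) as (ds & Hds & Htd).
  inversion Htd; subst; [congruence|].
  apply in_concat; exists [DCtor C ys D]; simpl; auto.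
Qed.

Lemma dtr_translated_csm {D ds d} :
  tr D = true -> In (DIntf D ds) Δ -> In d ds ->
  exists c, dtr2csm Δ tr Γ D d c /\ In c (concat dss).
Proof.
  intros HtrD HI Hd.
  destruct (Forall2_in_l _ _ _ _ Htrans HI) as (ds' & Hds' & Htd).
  inversion Htd; subst; [congruence|].
  match goal with Hcs : Forall2 _ ds ?cs |- _ =>
    destruct (Forall2_in_l _ _ _ _ Hcs Hd) as (c & Hc & Hdc);
    exists c; split; [exact Hdc|];
    apply in_concat; exists (DData D :: cs); simpl; auto
  end.
Qed.

Lemma translated_csm_origin {f D xs T cls} :
  In (DCsm f D xs T cls) (concat dss) ->
  (exists ds d, In (DIntf D ds) Δ /\ In d ds /\
     dtr2csm Δ tr Γ D d (DCsm f D xs T cls)) \/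
  (exists cls0, In (DCsm f D xs T cls0) Δ).
Proof.
  intros Hc. apply in_concat in Hc as (ds' & Hds' & Hc).
  destruct (Forall2_in_r _ _ _ _ Htrans Hds') as (d & Hd & Htd).
  inversion Htd; subst; simpl in Hc;
    repeat match goal with H : _ \/ _ |- _ => destruct H as [H|H] end;
    try discriminate; try contradiction.
  - left. match goal with Hcs : Forall2 _ _ _ |- _ =>
      destruct (Forall2_in_r _ _ _ _ Hcs Hc) as (dd & Hdd & Hdc) end.
    inversion Hdc; subst; eauto 6.
  - injection Hc as <- <- <- <- <-. eauto.
Qed.

Lemma translated_dtr_find_csm {D ds f xs T b} :
  NoDup (fun_names Δ) -> tr D = true ->
  In (DIntf D ds) Δ -> In (Dtr f xs T b) ds ->
  exists cls, find_csm (concat dss) f = Some (D, xs, T, cls) /\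
    dtr2csm Δ tr Γ D (Dtr f xs T b) (DCsm f D xs T cls).
Proof.
  intros Hnd HtrD HI Hd.
  destruct (dtr_translated_csm HtrD HI Hd) as (c & Hdc & Hc).
  assert (Hfind : exists r, find_csm (concat dss) f = Some r)
    by (inversion Hdc; subst; eapply find_csm_complete; eauto).
  destruct Hfind as [[[[D' xs'] T'] cls'] Hfind].
  destruct (translated_csm_origin (find_csm_in Hfind))
    as [(ds' & d' & HI' & Hd' & Hdc')|(cls0 & Hc0)].
  - inversion Hdc'; subst;
      destruct (dtr_unique Hnd HI' Hd' HI Hd eq_refl) as [-> E];
      injection E; intros; subst; eauto.
  - exfalso; exact (dtr_not_csm Hnd HI Hd Hc0).
Qed.

End TranslatedContext.

Lemma dtrBody_cases {Δ f C ys0 D fs0 ys xs e} :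
  NoDup (ctor_names Δ) -> In (DGen C ys0 D fs0) Δ ->
  dtrBody Δ f C = Some (ys, xs, e) ->
  (exists f1 xs1 T1, find_fn f fs0 = Some (Fn f1 xs1 T1 e) /\
     ys = map fst ys0 /\ xs = map fst xs1) \/
  (find_fn f fs0 = None /\ ys = [] /\
   exists ds xs1 T1, In (DIntf D ds) Δ /\ In (Dtr f xs1 T1 (Some e)) ds /\
     xs = map fst xs1).
Proof.
  intros Hnd HG. unfold dtrBody.
  destruct (find_gen Δ C) as [[[ys1 D1] fs1]|] eqn:Eg; [|discriminate].
  destruct (gen_unique Hnd (find_gen_in Eg) HG) as (-> & -> & ->).
  destruct (find_fn f fs0) as [[f1 xs1 T1 e1]|] eqn:Ef.
  - intros [= <- <- <-]. left; exists f1, xs1, T1; auto.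
  - destruct (find_intf Δ D) as [ds|] eqn:Ei; [|discriminate].
    destruct (find_dtr f ds) as [[f1 xs1 T1 [e1|]]|] eqn:Ed; try discriminate.
    intros [= <- <- <-].
    apply find_dtr_in in Ed as [Ed Ef1]; simpl in Ef1; subst f1.
    right; repeat split; eauto 7 using find_intf_in.
Qed.

Lemma csmBody_translated_dtr {Δ tr Γ Δ' D ds f xs T b cls C ys0 fs0 ys xs' e} :
  NoDup (ctor_names Δ) -> NoDup (fun_names Δ) ->
  In (DGen C ys0 D fs0) Δ -> In (DIntf D ds) Δ -> In (Dtr f xs T b) ds ->
  find_csm Δ' f = Some (D, xs, T, cls) ->
  dtr2csm Δ tr Γ D (Dtr f xs T b) (DCsm f D xs T cls) ->
  dtrBody Δ f C = Some (ys, xs', e) ->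
  exists Γ' e', trans_expr Δ tr Γ' e T e' /\
    csmBody Δ' f C = Some (ys, xs', this_to_self e').
Proof.
  intros Hctor Hfun HG HI Hd Hfind Hdc Hbody.
  unfold csmBody; rewrite Hfind.
  assert (Huniq : forall ys' fs', In (C, ys', fs') (gens Δ D) -> ys' = ys0 /\ fs' = fs0).
  { intros ys' fs' H%In_gens.
    destruct (gen_unique Hctor H HG) as (? & _ & ?); auto. }
  destruct (dtrBody_cases Hctor HG Hbody)
    as [(f1 & xs1 & T1 & Hfn & -> & ->)|(Hfn & -> & ds1 & xs1 & T1 & HI1 & Hd1 & ->)].
  - destruct (dtr2csm_find_clause Hdc Huniq (proj2 (In_gens _ _ _ _ _) HG) Hfn)
      as (e1 & e' & [= -> -> -> ->] & Hte & Hcl).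
    rewrite Hcl; eauto.
  - destruct (dtr_unique Hfun HI1 Hd1 HI Hd eq_refl) as [_ [= -> -> <-]].
    assert (Hnone : forall ys' fs', In (C, ys', fs') (gens Δ D) -> find_fn f fs' = None)
      by (intros ys' fs' H; destruct (Huniq ys' fs' H) as [_ ->]; exact Hfn).
    destruct (dtr2csm_find_wild Hdc Hnone) as (e0' & Hte & -> & ->).
    eauto.
Qed.

Theorem lemmaB6 (tr : name -> bool) (Γ : tctx) (P P' : program) (T0 : name)
    (D C f : name) (ys xs : list var) (e : expr) (T : name) (e' : expr) :
  wf_ctx (prog_ctx P) ->
  tr D = true ->
  trans_prog tr Γ P T0 P' ->
  Gen (prog_ctx P) D C ->
  Dtr_ (prog_ctx P) D f ->
  dtrBody (prog_ctx P) f C = Some (ys, xs, e) ->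
  trans_expr (prog_ctx P) tr Γ e T e' ->
  Ctr (prog_ctx P') D C /\ Csm (prog_ctx P') D f /\
  csmBody (prog_ctx P') f C = Some (ys, xs, this_to_self e').
Proof.
  unfold prog_ctx.
  intros (_ & Hctor & Hfun & _) HtrD (dss & Htrans & HP' & _) (ys0 & fs0 & HG)
    (ds & xs0 & T1 & b & HI & Hd) Hbody He.
  rewrite HP'.
  destruct (translated_dtr_find_csm Htrans Hfun HtrD HI Hd) as (cls & Hfind & Hdc).
  destruct (csmBody_translated_dtr Hctor Hfun HG HI Hd Hfind Hdc Hbody)
    as (Γ' & e'' & He'' & Hcsm).
  split; [|split].
  - exists ys0; exact (gen_translated_ctor Htrans HtrD HG).
  - exists xs0, T1, cls; exact (find_csm_in Hfind).
  - rewrite Hcsm, (trans_expr_det Hfun He'' He); reflexivity.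
Qed.
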